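(* Let $\Omega\subset\mathbb{R}^n$ be a bounded domain, $T>0$, $\mathscr D:=\Omega\times(0,T)$, $\mathscr U\subset\mathscr D$ open, and let $e:\mathscr D\times\mathbb{R}\to\mathbb{R}$, $(x,t,r)\mapsto e(x,t)[r]$, be affine in $r$ with $e(x,t)[\pm1]>0$ for $(x,t)\in\mathscr U$. If $e$ is continuous and bounded on $\mathscr U\times[-1,1]$, then the map $(x,t)\mapsto\pi(K_{(x,t)})$ is continuous and bounded on $\mathscr U$ with respect to the Hausdorff metric.
   Context: $n\ge2$; $\mathcal S_0^{n\times n}$ the trace-free symmetric matrices; $Z:=\mathbb{R}\times\mathbb{R}^n\times\mathbb{R}^n\times\mathcal S_0^{n\times n}\times\mathbb{R}$ with elements $z=(\rho,v,m,\sigma,p)$; $\pi(z):=(\rho,v,m,\sigma)$; $K_{(x,t)}:=\{z\in Z:\rho\in\{\pm1\},m=\rho v,v\otimes v-\sigma=e(x,t)[\rho]\mathrm{Id}\}$. *)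

From HB Require Import structures.
From mathcomp Require Import all_boot all_order all_algebra.
From mathcomp Require Import all_classical all_reals all_analysis.
Set Implicit Arguments. Unset Strict Implicit. Unset Printing Implicit Defensive.
Import Order.TTheory GRing.Theory Num.Theory.
Import numFieldNormedType.Exports.
Local Open Scope classical_set_scope.
Local Open Scope ring_scope.

(* Z = R x R^n x R^n x S_0^{nxn} x R ; an element is ((((rho, v), m), sigma), p).
   Row vectors 'rV_n represent R^n; sigma is an n x n matrix which is required
   to be symmetric and trace-free (membership in S_0^{nxn}). *)
Definition Zsp (R : realType) (n : nat) :=
  (R * 'rV[R]_n * 'rV[R]_n * 'M[R]_n * R)%type.
Definition Wsp (R : realType) (n : nat) :=
  (R * 'rV[R]_n * 'rV[R]_n * 'M[R]_n)%type.

Definition sym0 (R : realType) (n : nat) (s : 'M[R]_n) : Prop :=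
  s^T = s /\ \tr s = 0.

Definition piZ (R : realType) (n : nat) (z : Zsp R n) : Wsp R n := z.1.

(* K_{(x,t)} = {z : rho in {+-1}, m = rho v, v (x) v - sigma = e(x,t)[rho] Id} ;
   e x t r stands for e(x,t)[r]. *)
Definition Kset (R : realType) (n : nat) (e : 'rV[R]_n -> R -> R -> R)
    (x : 'rV[R]_n) (t : R) : set (Zsp R n) :=
  [set z | let: ((((rho, v), m), s), p) := z in
     sym0 s /\ (rho = 1 \/ rho = -1) /\ m = rho *: v /\
     v^T *m v - s = (e x t rho)%:M].

Definition piK (R : realType) (n : nat) (e : 'rV[R]_n -> R -> R -> R)
    (x : 'rV[R]_n) (t : R) : set (Wsp R n) :=
  (@piZ R n) @` Kset e x t.

Definition wdist (R : realType) (n : nat) (a b : Wsp R n) : R :=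
  let: (((r1, v1), m1), s1) := a in
  let: (((r2, v2), m2), s2) := b in
  Num.sqrt ((r1 - r2) ^+ 2 + \sum_i (v1 0 i - v2 0 i) ^+ 2
            + \sum_i (m1 0 i - m2 0 i) ^+ 2
            + \sum_i \sum_j (s1 i j - s2 i j) ^+ 2).

Definition pdist (R : realType) (n : nat) (a : Wsp R n) (B : set (Wsp R n))
  : \bar R := ereal_inf [set (wdist a b)%:E | b in B].

Definition hausdorff (R : realType) (n : nat) (A B : set (Wsp R n)) : \bar R :=
  maxe (ereal_sup [set pdist a B | a in A]) (ereal_sup [set pdist b A | b in B]).

From HB Require Import structures.
From mathcomp Require Import all_boot all_order all_algebra.
From mathcomp Require Import all_classical all_reals all_analysis.
From mathcomp Require Import ring lra.
Import Order.TTheory GRing.Theory Num.Theory.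
Import numFieldNormedType.Exports.
Set Implicit Arguments.
Unset Strict Implicit.
Unset Printing Implicit Defensive.

Local Open Scope classical_set_scope.
Local Open Scope ring_scope.

(* A point of pi(K_(x,t)) is (rho, v, rho v, v^T v - c Id) with rho = +-1 and
   c = e(x,t)[rho], and trace-freeness of sigma forces |v|^2 = n c.  Rescaling v
   by sqrt(c'/c) gives a point of pi(K_(x',t')) with the same rho, at distance
     kdist c c' = sqrt(2n (sqrt c - sqrt c')^2 + (n^2 - n)(c - c')^2)
   where c' = e(x',t')[rho].  Hence the Hausdorff distance is at most the sum of
   kdist over rho = +-1, and since (sqrt c - sqrt c')^2 <= |c - c'| this sum is
   small when e(x,t)[+-1] is close to e(x',t')[+-1] and bounded when e is. *)

Definition sqnorm {K : ringType} {p q : nat} (A : 'M[K]_(p, q)) : K :=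
  \sum_i \sum_j A i j ^+ 2.

Section SquaredNorm.
Variables (K : comRingType) (q : nat).
Implicit Types (a b : K) (v : 'rV[K]_q).

Lemma sqnorm_row v : sqnorm v = \sum_j v 0 j ^+ 2.
Proof. by rewrite /sqnorm big_ord1. Qed.

Lemma sqnormZ p a (A : 'M[K]_(p, q)) : sqnorm (a *: A) = a ^+ 2 * sqnorm A.
Proof.
rewrite /sqnorm mulr_sumr; apply: eq_bigr => i _; rewrite mulr_sumr.
by apply: eq_bigr => j _; rewrite mxE exprMn.
Qed.

Lemma mxtrace_tr_mul v : \tr (v^T *m v) = sqnorm v.
Proof. by rewrite sqnorm_row; apply: eq_bigr => i _; rewrite !mxE big_ord1 !mxE expr2. Qed.

Lemma sumr_natmul_eq (F : 'I_q -> K) i : \sum_j F j *+ (i == j) = F i.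
Proof.
rewrite (bigD1 i) //= eqxx mulr1n big1 ?addr0 // => j ji.
by rewrite eq_sym (negbTE ji) mulr0n.
Qed.

Lemma sqnorm_tr_mul_sub_scalar a b v :
  sqnorm (a *: (v^T *m v) - b%:M) =
  a ^+ 2 * sqnorm v ^+ 2 - 2 * a * b * sqnorm v + q%:R * b ^+ 2.
Proof.
transitivity (\sum_i (a ^+ 2 * v 0 i ^+ 2 * sqnorm v - (2 * a * b * v 0 i ^+ 2 - b ^+ 2))).
  apply: eq_bigr => i _.
  transitivity (\sum_j (a ^+ 2 * v 0 i ^+ 2 * v 0 j ^+ 2
                      - (2 * a * b * v 0 i ^+ 2 - b ^+ 2) *+ (i == j))).
    apply: eq_bigr => j _; rewrite !mxE big_ord1 !mxE.
    by case: (i =P j) => [<-|_]; rewrite ?mulr1n ?mulr0n; ring.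
  by rewrite sumrB sumr_natmul_eq sqnorm_row mulr_sumr.
rewrite !sumrB sumr_const card_ord -mulr_suml -!mulr_sumr -sqnorm_row -mulr_natl; ring.
Qed.

End SquaredNorm.

Lemma sqr_sub_sqrt_le (F : rcfType) (a b : F) : 0 <= a -> 0 <= b ->
  (Num.sqrt a - Num.sqrt b) ^+ 2 <= `|a - b|.
Proof.
move=> a0 b0; rewrite -[a in `|a - _|]sqr_sqrtr // -[b in `|_ - b|]sqr_sqrtr //.
have := sqrtr_ge0 a; have := sqrtr_ge0 b.
set x := Num.sqrt a; set y := Num.sqrt b => y0 x0.
by case: (lerP y x) => yx; [rewrite ger0_norm | rewrite ltr0_norm]; nra.
Qed.

Lemma sqr_sqrt_divK (F : rcfType) (c c' : F) : 0 < c -> 0 <= c' ->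
  (Num.sqrt c' / Num.sqrt c) ^+ 2 * c = c'.
Proof.
by move=> c0 c'0; rewrite expr_div_n !sqr_sqrtr ?(ltW c0) // mulfVK // gt_eqF.
Qed.

Section ProjectedK.
Variables (R : realType) (n : nat).
Implicit Types (rho c : R) (v : 'rV[R]_n) (e : 'rV[R]_n -> R -> R -> R).
Implicit Types (a b : Wsp R n) (A B : set (Wsp R n)).

Lemma wdistE r1 (v1 m1 : 'rV[R]_n) s1 r2 v2 m2 s2 :
  wdist (r1, v1, m1, s1) (r2, v2, m2, s2) =
  Num.sqrt ((r1 - r2) ^+ 2 + sqnorm (v1 - v2) + sqnorm (m1 - m2) + sqnorm (s1 - s2)).
Proof.
rewrite /wdist [sqnorm (s1 - s2)]/sqnorm !sqnorm_row; congr (Num.sqrt (_ + _ + _ + _)).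
- by apply: eq_bigr => i _; rewrite !mxE.
- by apply: eq_bigr => i _; rewrite !mxE.
- by apply: eq_bigr => i _; apply: eq_bigr => j _; rewrite !mxE.
Qed.

Lemma pdist_le_wdist a B b : B b -> (pdist a B <= (wdist a b)%:E)%E.
Proof. by move=> Bb; apply: ereal_inf_lbound; exists b. Qed.

Lemma hausdorff_le A B (r : \bar R) :
  (forall a, A a -> pdist a B <= r)%E -> (forall b, B b -> pdist b A <= r)%E ->
  (hausdorff A B <= r)%E.
Proof.
move=> AB BA; rewrite /hausdorff ge_max.
by apply/andP; split; apply: ge_ereal_sup => _ [a Aa <-]; [apply: AB | apply: BA].
Qed.

Definition kpoint rho v c : Wsp R n := (rho, v, rho *: v, v^T *m v - c%:M).

Lemma piK_kpoint e x t rho v : rho = 1 \/ rho = -1 ->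
  sqnorm v = n%:R * e x t rho -> piK e x t (kpoint rho v (e x t rho)).
Proof.
move=> rho1 vn; exists (kpoint rho v (e x t rho), 0) => //.
split; last by split; [|split; [|rewrite opprB addrC subrK]].
split; first by rewrite linearB /= trmx_mul trmxK tr_scalar_mx.
by rewrite raddfB /= mxtrace_tr_mul mxtrace_scalar vn mulr_natl subrr.
Qed.

Lemma piK_kpointP e x t w : piK e x t w -> exists rho v,
  [/\ rho = 1 \/ rho = -1, sqnorm v = n%:R * e x t rho & w = kpoint rho v (e x t rho)].
Proof.
case=> [[[[[rho v] m] s] p]] [[_ s0] [rho1 [-> vvs]]] <-.
have {vvs}sE : s = v^T *m v - (e x t rho)%:M by rewrite -vvs opprB addrC subrK.
exists rho, v; rewrite {}sE in s0 *; split => //.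
by move: s0; rewrite raddfB /= mxtrace_tr_mul mxtrace_scalar mulr_natl => /subr0_eq.
Qed.

Lemma wdist_kpointZ rho v c l : rho ^+ 2 = 1 -> sqnorm v = n%:R * c ->
  wdist (kpoint rho v c) (kpoint rho (l *: v) (l ^+ 2 * c)) =
  Num.sqrt (2 * n%:R * (c * (1 - l) ^+ 2) + (n%:R ^+ 2 - n%:R) * (c - l ^+ 2 * c) ^+ 2).
Proof.
move=> rho2 vn; rewrite wdistE /kpoint.
have -> : v - l *: v = (1 - l) *: v by rewrite scalerBl scale1r.
have -> : rho *: v - rho *: (l *: v) = rho *: ((1 - l) *: v).
  by rewrite scalerBl scale1r scalerBr.
have -> : v^T *m v - c%:M - ((l *: v)^T *m (l *: v) - (l ^+ 2 * c)%:M) =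
          (1 - l ^+ 2) *: (v^T *m v) - (c - l ^+ 2 * c)%:M.
  apply/matrixP => i j; rewrite !mxE !big_ord1 !mxE.
  by case: (i == j); rewrite ?mulr1n ?mulr0n; ring.
rewrite !sqnormZ sqnorm_tr_mul_sub_scalar rho2 vn; congr Num.sqrt; ring.
Qed.

Definition kdist (c c' : R) : R :=
  Num.sqrt (2 * n%:R * (Num.sqrt c - Num.sqrt c') ^+ 2
            + (n%:R ^+ 2 - n%:R) * (c - c') ^+ 2).

Lemma kdistC (c c' : R) : kdist c c' = kdist c' c.
Proof. by rewrite /kdist; congr Num.sqrt; ring. Qed.

Lemma natr_sqr_sub_ge0 : 0 <= n%:R ^+ 2 - n%:R :> R.
Proof. by rewrite subr_ge0 -natrX ler_nat; case: n => // m; rewrite leq_pmulr. Qed.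

Lemma kdist_le (c c' d : R) : 0 <= c -> 0 <= c' -> `|c - c'| <= d ->
  kdist c c' <= Num.sqrt (2 * n%:R * d + (n%:R ^+ 2 - n%:R) * d ^+ 2).
Proof.
move=> c0 c'0 cd; have d0 : 0 <= d := le_trans (normr_ge0 _) cd.
rewrite ler_sqrt; last by rewrite addr_ge0 ?mulr_ge0 ?natr_sqr_sub_ge0 ?sqr_ge0.
apply: lerD; apply: ler_wpM2l; rewrite ?mulr_ge0 ?natr_sqr_sub_ge0 //.
  exact: le_trans (sqr_sub_sqrt_le c0 c'0) cd.
by rewrite -real_normK ?num_real // lerXn2r ?nnegrE.
Qed.

Lemma kdist_small (eps : R) : 0 < eps -> exists2 eta, 0 < eta &
  forall c c', 0 <= c -> 0 <= c' -> `|c - c'| < eta -> kdist c c' < eps.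
Proof.
move=> eps0; set N : R := n%:R.
have N1 : 0 < N ^+ 2 + N + 1 by rewrite ltr_pwDr // addr_ge0 ?sqr_ge0.
exists (Order.min 1 (eps ^+ 2 / (N ^+ 2 + N + 1))).
  by rewrite lt_min ltr01 divr_gt0 ?exprn_gt0.
move=> c c' c0 c'0; rewrite lt_min => /andP[d1 deps].
apply: le_lt_trans (kdist_le c0 c'0 (lexx _)) _.
have -> : eps = Num.sqrt (eps ^+ 2) by rewrite sqrtr_sqr gtr0_norm.
rewrite ltr_sqrt ?exprn_gt0 //.
move: deps; rewrite ltr_pdivlMr // => deps.
have := natr_sqr_sub_ge0; have := normr_ge0 (c - c'); rewrite -/N.
set d := `|c - c'| in d1 deps * => d0 N2.
have : (N ^+ 2 - N) * d ^+ 2 <= (N ^+ 2 - N) * d by rewrite ler_wpM2l //; nra.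
nra.
Qed.

Lemma wdist_kpoint_rescale rho v (c c' : R) :
  rho ^+ 2 = 1 -> 0 < c -> 0 <= c' -> sqnorm v = n%:R * c ->
  wdist (kpoint rho v c) (kpoint rho ((Num.sqrt c' / Num.sqrt c) *: v) c') = kdist c c'.
Proof.
move=> rho2 c0 c'0 vn; set l := Num.sqrt c' / Num.sqrt c.
have sc0 : Num.sqrt c != 0 by rewrite gt_eqF ?sqrtr_gt0.
have lc : l ^+ 2 * c = c' by exact: sqr_sqrt_divK.
have cl : c * (1 - l) ^+ 2 = (Num.sqrt c - Num.sqrt c') ^+ 2.
  by rewrite -[c in LHS](sqr_sqrtr (ltW c0)) -exprMn mulrBr mulr1 /l mulrCA divff ?mulr1.
by rewrite -[in LHS]lc wdist_kpointZ // cl lc.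
Qed.

Lemma pdist_piK_le e x t x' t' a :
  0 < e x t 1 /\ 0 < e x t (-1) -> 0 < e x' t' 1 /\ 0 < e x' t' (-1) ->
  piK e x t a ->
  (pdist a (piK e x' t') <=
   (kdist (e x t 1) (e x' t' 1) + kdist (e x t (-1)) (e x' t' (-1)))%:E)%E.
Proof.
move=> [p1 n1] [p1' n1'] /piK_kpointP [rho [v [rho1 vn ->]]].
have rho2 : rho ^+ 2 = 1 by case: rho1 => ->; rewrite ?sqrrN expr1n.
have [c0 c'0] : 0 < e x t rho /\ 0 < e x' t' rho by case: rho1 => ->.
set l := Num.sqrt (e x' t' rho) / Num.sqrt (e x t rho).
have lvn : sqnorm (l *: v) = n%:R * e x' t' rho.
  by rewrite sqnormZ vn mulrCA sqr_sqrt_divK ?ltW.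
apply: le_trans (pdist_le_wdist _ (piK_kpoint rho1 lvn)) _.
rewrite (wdist_kpoint_rescale rho2 c0 (ltW c'0) vn) lee_fin.
by case: rho1 => ->; [rewrite lerDl | rewrite lerDr]; apply: sqrtr_ge0.
Qed.

Lemma hausdorff_piK_le e x t x' t' :
  0 < e x t 1 /\ 0 < e x t (-1) -> 0 < e x' t' 1 /\ 0 < e x' t' (-1) ->
  (hausdorff (piK e x t) (piK e x' t') <=
   (kdist (e x t 1) (e x' t' 1) + kdist (e x t (-1)) (e x' t' (-1)))%:E)%E.
Proof.
move=> pos pos'; apply: hausdorff_le => a; first exact: pdist_piK_le.
by rewrite kdistC [kdist (e x t (-1)) _]kdistC; apply: pdist_piK_le.
Qed.

End ProjectedK.

Lemma continuous_within_slice (R : realType) (T S : pseudoMetricType R)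
    (A : set T) (P : set S) (f : T * S -> R) y r :
  {within [set q | A q.1 /\ P q.2], continuous f} -> A y -> P r ->
  forall eta, 0 < eta -> exists2 d, 0 < d &
    forall y', A y' -> ball y d y' -> `|f (y, r) - f (y', r)| < eta.
Proof.
move=> fc Ay Pr eta eta0.
have := proj1 (subspace_continuousP _ _) fc (y, r) (conj Ay Pr).
move/cvgrPdist_lt/(_ eta eta0); rewrite near_withinE => /nbhs_ballP [d d0 fd].
exists d => // y' Ay' yy'; apply: (fd (y', r)) => //.
by split => //=; exact: ballxx.
Qed.

Section HausdorffContinuity.
Variables (R : realType) (n : nat) (U : set ('rV[R]_n * R)) (e : 'rV[R]_n -> R -> R -> R).
Hypothesis e_pos : forall y, U y -> 0 < e y.1 y.2 1 /\ 0 < e y.1 y.2 (-1).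

Let itv_pm1_1 : -1 <= (1 : R) <= 1. Proof. by apply/andP; split; lra. Qed.
Let itv_pm1_N1 : -1 <= (-1 : R) <= 1. Proof. by apply/andP; split; lra. Qed.

Lemma hausdorff_piK_continuous :
  {within [set q : 'rV[R]_n * R * R | U q.1 /\ -1 <= q.2 <= 1],
     continuous (fun q : 'rV[R]_n * R * R => e q.1.1 q.1.2 q.2)} ->
  forall y, U y -> forall eps : R, 0 < eps -> exists2 delta : R, 0 < delta &
    forall y', U y' -> ball y delta y' ->
      (hausdorff (piK e y.1 y.2) (piK e y'.1 y'.2) < eps%:E)%E.
Proof.
move=> econt y Uy eps eps0.
have [eta eta0 kdist_lt] := kdist_small n (divr_gt0 eps0 (ltr0Sn R 1)).
have [d1 d10 near1] :=
  continuous_within_slice (P := fun r : R => -1 <= r <= 1) econt Uy itv_pm1_1 eta0.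
have [d2 d20 near2] :=
  continuous_within_slice (P := fun r : R => -1 <= r <= 1) econt Uy itv_pm1_N1 eta0.
exists (Order.min d1 d2) => [|y' Uy' yy']; first by rewrite lt_min d10 d20.
apply: le_lt_trans (hausdorff_piK_le (e_pos Uy) (e_pos Uy')) _.
have [[p1 m1] [p1' m1']] := (e_pos Uy, e_pos Uy').
rewrite lte_fin (splitr eps) ltrD // kdist_lt ?ltW //.
  by apply: near1 => //; apply: le_ball yy'; rewrite ge_min lexx.
by apply: near2 => //; apply: le_ball yy'; rewrite ge_min lexx orbT.
Qed.

Lemma hausdorff_piK_bounded :
  (exists M : R, forall q : 'rV[R]_n * R * R,
      U q.1 -> -1 <= q.2 <= 1 -> `|e q.1.1 q.1.2 q.2| <= M) ->
  exists C : R, forall y y', U y -> U y' ->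
    (hausdorff (piK e y.1 y.2) (piK e y'.1 y'.2) <= C%:E)%E.
Proof.
move=> [M eM]; set K := Num.sqrt (2 * n%:R * M + (n%:R ^+ 2 - n%:R) * M ^+ 2).
exists (K + K) => y y' Uy Uy'.
apply: le_trans (hausdorff_piK_le (e_pos Uy) (e_pos Uy')) _.
have kdist_leK r : -1 <= r <= 1 -> 0 < e y.1 y.2 r -> 0 < e y'.1 y'.2 r ->
    kdist n (e y.1 y.2 r) (e y'.1 y'.2 r) <= K.
  move=> r1 c0 c'0; apply: kdist_le; [exact: ltW | exact: ltW |].
  have := eM (y, r) Uy r1; have := eM (y', r) Uy' r1.
  rewrite /= (gtr0_norm c0) (gtr0_norm c'0) ler_norml => ? ?.
  by apply/andP; split; lra.
have [[p1 m1] [p1' m1']] := (e_pos Uy, e_pos Uy').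
by rewrite lee_fin lerD // kdist_leK.
Qed.

End HausdorffContinuity.

Theorem lemma3p12 (R : realType) (n : nat) (Omega : set 'rV[R]_n) (T : R)
  (U : set ('rV[R]_n * R)) (e : 'rV[R]_n -> R -> R -> R) :
  (2 <= n)%N ->
  open Omega -> connected Omega -> Omega !=set0 -> bounded_set Omega ->
  0 < T ->
  open U ->
  U `<=` [set y | Omega y.1 /\ 0 < y.2 < T] ->
  (exists a b : 'rV[R]_n -> R -> R, forall x t r,
      Omega x -> 0 < t < T -> e x t r = a x t + b x t * r) ->
  (forall y, U y -> 0 < e y.1 y.2 1 /\ 0 < e y.1 y.2 (-1)) ->
  {within [set q : 'rV[R]_n * R * R | U q.1 /\ -1 <= q.2 <= 1],
     continuous (fun q : 'rV[R]_n * R * R => e q.1.1 q.1.2 q.2)} ->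
  (exists M : R, forall q : 'rV[R]_n * R * R,
      U q.1 -> -1 <= q.2 <= 1 -> `|e q.1.1 q.1.2 q.2| <= M) ->
  (forall y, U y -> forall eps : R, 0 < eps -> exists2 delta : R, 0 < delta &
      forall y', U y' -> ball y delta y' ->
        (hausdorff (piK e y.1 y.2) (piK e y'.1 y'.2) < eps%:E)%E)
  /\
  (exists C : R, forall y y', U y -> U y' ->
      (hausdorff (piK e y.1 y.2) (piK e y'.1 y'.2) <= C%:E)%E).
Proof.
move=> _ _ _ _ _ _ _ _ _ e_pos econt ebounded.
split; first exact: hausdorff_piK_continuous.
exact: hausdorff_piK_bounded.
Qed.
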